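(* For all real numbers $t\ge1$, $s\ge e$, $c\in(0,1]$ and $0<\omega\le\delta\le e^{-e}$, $$\frac1t\ln\Big(\frac{\ln(2t)}{\omega}\Big)\ge\frac cs\ln\Big(\frac{\ln s}{\delta}\Big)\ \Longrightarrow\ t\le\frac sc\cdot\frac{\ln(2/\omega)+\ln\ln(1/(c\omega))}{\ln(1/\delta)}.$$ *)

From Stdlib Require Import Reals.

(* The left-hand side f(t) = ln(ln(2t)/omega)/t is strictly decreasing for
   t >= e/2, because ln(1/omega) > 1.  It therefore suffices to show that f at
   the threshold t0 = (s/c) A / ln(1/delta), A = ln(2/omega) + ln ln(1/(c omega)),
   is at most (c/s) ln(ln s/delta).  Taking logarithms, this reduces to
   ln(2 t0) <= 2 ln s ln(1/(c omega)), which follows from ln x <= x - 1. *)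

From Stdlib Require Import Reals Lra.
From Coquelicot Require Import Rcomplements.
Open Scope R_scope.

Lemma two_lt_exp1 : 2 < exp 1.
Proof. pose proof (exp_ineq1 1 R1_neq_R0). lra. Qed.

Lemma ln_le_sub1 x : 0 < x -> ln x <= x - 1.
Proof.
  intros hx. pose proof (exp_ineq1_le (ln x)) as h. rewrite exp_ln in h; lra.
Qed.

Lemma ln_ge0 x : 1 <= x -> 0 <= ln x.
Proof. intros hx. rewrite <- ln_1. apply ln_le; lra. Qed.

Lemma ln_ge1 x : exp 1 <= x -> 1 <= ln x.
Proof. intros hx. rewrite <- (ln_exp 1). apply ln_le; [apply exp_pos | exact hx]. Qed.

Lemma ln_one_div x : 0 < x -> ln (1 / x) = - ln x.
Proof. intros hx. unfold Rdiv. rewrite Rmult_1_l. now apply ln_Rinv. Qed.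

Lemma ln_add_le a b : 1 <= a -> 0 <= b -> ln (a + b) <= ln a + b.
Proof.
  intros ha hb.
  assert (hab : a + b <= a * exp b) by (pose proof (exp_ineq1_le b); nra).
  rewrite <- (ln_exp b) at 2. rewrite <- ln_mult by (apply exp_pos || lra).
  apply ln_le; lra.
Qed.

Lemma ln_ln_double_le x y :
  exp 1 <= 2 * x -> x <= y -> ln (ln (2 * y)) <= ln (ln (2 * x)) + (y / x - 1).
Proof.
  intros hx hxy.
  pose proof two_lt_exp1.
  assert (hr : 1 <= y / x) by (apply Rle_div_r; lra).
  assert (hsplit : ln (2 * y) = ln (2 * x) + ln (y / x)).
  { rewrite <- ln_mult by lra. f_equal. field. lra. }
  rewrite hsplit.
  pose proof (ln_add_le _ _ (ln_ge1 _ hx) (ln_ge0 _ hr)).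
  pose proof (ln_le_sub1 (y / x)).
  lra.
Qed.

(* With r = y / x, the numerator K := ln (ln (2 x) / omega) > 1 grows by at
   most r - 1 while the denominator grows by the factor r, and
   K + r - 1 < r K. *)
Lemma rate_decreasing omega x y :
  0 < omega -> omega < exp (-1) -> exp 1 <= 2 * x -> x < y ->
  (1 / y) * ln (ln (2 * y) / omega) < (1 / x) * ln (ln (2 * x) / omega).
Proof.
  intros homega hsmall hx hxy.
  pose proof two_lt_exp1.
  pose proof (ln_ge1 _ hx) as hlx.
  assert (hly : 1 <= ln (2 * y)) by (apply ln_ge1; lra).
  pose proof (ln_ge0 _ hlx) as hlnx.
  assert (homega1 : 1 < - ln omega).
  { pose proof (ln_increasing _ _ homega hsmall). rewrite ln_exp in *. lra. }
  pose proof (ln_ln_double_le x y hx (Rlt_le _ _ hxy)) as hgrow.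
  assert (hr : 1 < y / x) by (apply Rlt_div_r; lra).
  rewrite !ln_div by lra.
  set (K := ln (ln (2 * x)) - ln omega) in *.
  set (r := y / x) in *.
  apply (Rmult_lt_reg_l y); [lra|].
  replace (y * (1 / y * (ln (ln (2 * y)) - ln omega))) with (ln (ln (2 * y)) - ln omega)
    by (field; lra).
  replace (y * (1 / x * K)) with (r * K) by (unfold r; field; lra).
  assert (0 < (r - 1) * (K - 1)) by (apply Rmult_lt_0_compat; unfold K; lra).
  unfold K in *. nra.
Qed.

(* In the application L = ln(1/delta), W = ln(1/omega), u = ln(1/c), l = ln s,
   and ln 2 + l + u + ln A - ln L is ln(2 t0). *)
Section ThresholdBound.

Variables L W u l : R.
Hypotheses (hL : exp 1 <= L) (hLW : L <= W) (hu : 0 <= u) (hl : 1 <= l).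

Let A := ln 2 + W + ln (u + W).

Lemma double_threshold_log_le : ln 2 + l + u + ln A - ln L <= 2 * l * (u + W).
Proof.
  pose proof two_lt_exp1. pose proof ln_lt_2.
  assert (hln2 : ln 2 < 1) by (rewrite <- (ln_exp 1); apply ln_increasing; lra).
  assert (hlnM1 : 1 <= ln (u + W)) by (apply ln_ge1; lra).
  assert (hlnM : ln (u + W) <= u + W - 1) by (apply ln_le_sub1; lra).
  pose proof (ln_ge1 _ hL).
  assert (hlnA : ln A <= A - 1) by (apply ln_le_sub1; unfold A; lra).
  assert (0 <= (l - 1) * (2 * (u + W) - 1)) by (apply Rmult_le_pos; lra).
  unfold A in *. nra.
Qed.

Lemma threshold_rate_cross_le :
  L * (W + ln (ln 2 + l + u + ln A - ln L)) <= A * (L + ln l).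
Proof.
  pose proof two_lt_exp1. pose proof ln_lt_2.
  assert (hlnM1 : 1 <= ln (u + W)) by (apply ln_ge1; lra).
  assert (hLA : L <= A) by (unfold A; lra).
  assert (hlnLA : ln L <= ln A) by (apply ln_le; lra).
  pose proof (ln_ge0 _ hl).
  assert (hlog : ln (ln 2 + l + u + ln A - ln L) <= ln 2 + ln l + ln (u + W)).
  { rewrite <- !ln_mult by lra. apply ln_le; [lra|]. apply double_threshold_log_le. }
  assert (L * (W + ln (ln 2 + l + u + ln A - ln L)) <= L * (A + ln l))
    by (apply Rmult_le_compat_l; unfold A in *; lra).
  assert (L * ln l <= A * ln l) by (apply Rmult_le_compat_r; lra).
  nra.
Qed.

End ThresholdBound.

Definition threshold s c omega delta :=
  (s / c) * ((ln (2 / omega) + ln (ln (1 / (c * omega)))) / ln (1 / delta)).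

Section Threshold.

Variables s c omega delta : R.
Hypotheses (hs : exp 1 <= s) (hc0 : 0 < c) (hc1 : c <= 1)
  (homega : 0 < omega) (hod : omega <= delta) (hdelta : delta <= exp (- exp 1)).

Let L := ln (1 / delta).
Let W := ln (1 / omega).
Let u := ln (1 / c).
Let A := ln 2 + W + ln (u + W).

Lemma threshold_params :
  exp 1 <= L /\ L <= W /\ 0 <= u /\ 1 <= ln s /\ 0 < ln 2 + ln (u + W).
Proof.
  pose proof two_lt_exp1. pose proof ln_lt_2.
  assert (hdelta0 : 0 < delta) by lra.
  pose proof (ln_le _ _ hdelta0 hdelta). pose proof (ln_le _ _ homega hod).
  pose proof (ln_le _ _ hc0 hc1).
  rewrite ln_exp, ln_1 in *.
  unfold L, W, u. rewrite !ln_one_div by lra.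
  pose proof (ln_ge1 s hs).
  assert (1 <= ln (- ln c + - ln omega)) by (apply ln_ge1; lra).
  lra.
Qed.

Lemma threshold_eq : threshold s c omega delta = s / c * (A / L).
Proof.
  unfold threshold, A, L, W, u.
  rewrite ln_div, (ln_one_div (c * omega)), ln_mult by (try apply Rmult_lt_0_compat; lra).
  rewrite !ln_one_div by lra. do 4 f_equal. ring.
Qed.

Lemma threshold_ge : s <= threshold s c omega delta.
Proof.
  destruct threshold_params as (hL & hLW & hu & hl & hpos).
  pose proof two_lt_exp1.
  rewrite threshold_eq.
  assert (hAL : 1 <= A / L) by (apply Rle_div_r; unfold A; lra).
  assert (hsc : s <= s / c) by (apply Rle_div_r; nra).
  assert (s / c * 1 <= s / c * (A / L)) by (apply Rmult_le_compat_l; lra).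
  lra.
Qed.

Lemma ln_double_threshold :
  ln (2 * threshold s c omega delta) = ln 2 + ln s + u + ln A - ln L.
Proof.
  destruct threshold_params as (hL & hLW & hu & hl & hpos).
  pose proof two_lt_exp1.
  assert (hsc : 0 < s / c) by (apply Rdiv_lt_0_compat; lra).
  assert (hAL : 0 < A / L) by (apply Rdiv_lt_0_compat; unfold A; lra).
  rewrite threshold_eq, ln_mult, ln_mult, ln_div, ln_div
    by (first [lra | apply Rmult_lt_0_compat; lra | unfold A; lra]).
  unfold u. rewrite ln_one_div by lra. lra.
Qed.

Lemma threshold_rate_le :
  (1 / threshold s c omega delta) * ln (ln (2 * threshold s c omega delta) / omega)
    <= (c / s) * ln (ln s / delta).
Proof.
  destruct threshold_params as (hL & hLW & hu & hl & hpos).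
  pose proof two_lt_exp1. pose proof ln_lt_2.
  assert (hLA : L <= A) by (unfold A; lra).
  assert (hlnLA : ln L <= ln A) by (apply ln_le; lra).
  assert (hW : ln omega = - W) by (unfold W; rewrite ln_one_div by lra; lra).
  assert (hLd : ln delta = - L) by (unfold L; rewrite ln_one_div by lra; lra).
  rewrite ln_double_threshold, !ln_div, hW, hLd, threshold_eq by lra.
  replace (1 / (s / c * (A / L))) with (c / s * (L / A)) by (field; repeat split; lra).
  rewrite Rmult_assoc.
  apply Rmult_le_compat_l; [apply Rlt_le, Rdiv_lt_0_compat; lra |].
  replace (L / A * (ln (ln 2 + ln s + u + ln A - ln L) - - W))
    with (L * (W + ln (ln 2 + ln s + u + ln A - ln L)) / A) by (field; lra).
  apply Rle_div_l; [lra|].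
  replace ((ln (ln s) - - L) * A) with (A * (L + ln (ln s))) by ring.
  exact (threshold_rate_cross_le L W u (ln s) hL hLW hu hl).
Qed.

End Threshold.

Theorem lemma6 (t s c omega delta : R)
  (ht : 1 <= t) (hs : exp 1 <= s) (hc0 : 0 < c) (hc1 : c <= 1)
  (homega : 0 < omega) (hod : omega <= delta) (hdelta : delta <= exp (- exp 1)) :
  (1 / t) * ln (ln (2 * t) / omega) >= (c / s) * ln (ln s / delta) ->
  t <= (s / c) * ((ln (2 / omega) + ln (ln (1 / (c * omega)))) / ln (1 / delta)).
Proof.
  intros hrate.
  change (t <= threshold s c omega delta).
  destruct (Rle_or_lt t (threshold s c omega delta)) as [hle | hlt]; [exact hle | exfalso].
  pose proof two_lt_exp1.
  assert (hsmall : omega < exp (-1)).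
  { apply Rle_lt_trans with (exp (- exp 1)); [lra | apply exp_increasing; lra]. }
  pose proof (threshold_ge s c omega delta hs hc0 hc1 homega hod hdelta).
  pose proof (threshold_rate_le s c omega delta hs hc0 hc1 homega hod hdelta).
  pose proof (rate_decreasing omega (threshold s c omega delta) t homega hsmall
    ltac:(lra) hlt).
  lra.
Qed.
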